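(* Let $\mathcal{K}=(\mathcal{R},\mathcal{T})$ be an ME-consistent $\mathcal{ALCP}$ knowledge base over $\mathcal{L}$, $C,D$ concepts, and $\kappa\in\mathcal{L}$ with $P^{ME}_{\mathcal{R}}(\kappa)>0$. Then $$\mathcal{B}^{s}_{\mathcal{K}}(C\sqsubseteq D\mid\kappa)=\frac{\sum_{w\in\mathrm{Int}(\mathcal{L}),\ \mathcal{T}_w\models C\sqsubseteq D,\ w\models\kappa}P^{ME}_{\mathcal{R}}(w)}{P^{ME}_{\mathcal{R}}(\kappa)}.$$
   Context: $\mathcal{L}$ is a propositional language over a finite set of variables; $\mathrm{Int}(\mathcal{L})$ is the set of truth assignments. A probability distribution over $\mathcal{L}$ is $P:\mathrm{Int}(\mathcal{L})\to[0,1]$ summing to $1$, with $P(\phi)=\sum_{v\models\phi}P(v)$. A probabilistic constraint is $c_0+\sum_{i=1}^k c_i\,\mathsf{p}(\phi_i)\ge 0$ ($c_i\in\mathbb{R}$, $\phi_i\in\mathcal{L}$), satisfied by $P$ iff $c_0+\sum_ic_iP(\phi_i)\ge0$; $\mathrm{Mod}(\mathcal{R})$ is the set of distributions satisfying all constraints in $\mathcal{R}$; for consistent $\mathcal{R}$, $P^{ME}_{\mathcal{R}}$ is the unique maximizer in $\mathrm{Mod}(\mathcal{R})$ of $H(P)=-\sum_vP(v)\log P(v)$. Concepts: $C::=A\mid\neg C\mid C\sqcap C\mid\exists r.C$. An $\mathcal{L}$-GCI is $\langle C\sqsubseteq D:\kappa\rangle$, $\kappa\in\mathcal{L}$; an $\mathcal{L}$-TBox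 is a finite set of them; a KB is $\mathcal{K}=(\mathcal{R},\mathcal{T})$. A possible world $\mathcal{I}=(\Delta^{\mathcal{I}},\cdot^{\mathcal{I}},v^{\mathcal{I}})$ is a classical $\mathcal{ALC}$ interpretation together with $v^{\mathcal{I}}\in\mathrm{Int}(\mathcal{L})$; it models $\langle C\sqsubseteq D:\kappa\rangle$ iff $v^{\mathcal{I}}\not\models\kappa$ or $C^{\mathcal{I}}\subseteq D^{\mathcal{I}}$. For $w\in\mathrm{Int}(\mathcal{L})$, $\mathcal{T}_w=\{C\sqsubseteq D\mid\langle C\sqsubseteq D:\kappa\rangle\in\mathcal{T}, w\models\kappa\}$, and $\mathcal{T}_w\models C\sqsubseteq D$ means $C^{\mathcal{I}}\subseteq D^{\mathcal{I}}$ in every classical interpretation satisfying all inclusions of $\mathcal{T}_w$. An $\mathcal{ALCP}$-interpretation $\mathcal{P}=(\mathfrak{I},P_{\mathfrak{I}})$ is a nonempty finite set of possible worlds with a probability distribution on it; $P^{\mathcal{P}}(v)=\sum_{\mathcal{I}\in\mathfrak{I},v^{\mathcal{I}}=v}P_{\mathfrak{I}}(\mathcal{I})$. $\mathcal{P}$ is an ME-$\mathcal{ALCP}$-model of $\mathcal{K}$ iff all its worlds model every GCI of $\mathcal{T}$ and $P^{\mathcal{P}}=P^{ME}_{\mathcal{R}}$; $\mathrm{Mod}_{ME}(\mathcal{K})$ is the set of these; $\mathcal{K}$ is ME-consistent iff it is nonempty. $\Pr_{\mathcal{P}}(C\sqsubseteq D\mid\kappa)=\big(\sum_{\mathcal{I}\in\mathfrak{I},v^{\mathcal{I}}\models\kappa,C^{\mathcal{I}}\subseteq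 D^{\mathcal{I}}}P_{\mathfrak{I}}(\mathcal{I})\big)/\big(\sum_{\mathcal{I}\in\mathfrak{I},v^{\mathcal{I}}\models\kappa}P_{\mathfrak{I}}(\mathcal{I})\big)$. The sceptical degree of belief is $\mathcal{B}^{s}_{\mathcal{K}}(C\sqsubseteq D\mid\kappa)=\inf_{\mathcal{P}\in\mathrm{Mod}_{ME}(\mathcal{K})}\Pr_{\mathcal{P}}(C\sqsubseteq D\mid\kappa)$. *)

From HB Require Import structures.
From mathcomp Require Import all_boot all_order all_algebra.
From mathcomp Require Import boolp classical_sets reals exp.
From Stdlib Require List.
Set Implicit Arguments. Unset Strict Implicit. Unset Printing Implicit Defensive.
Import Order.TTheory GRing.Theory Num.Theory.
Local Open Scope ring_scope.

Inductive pform (V : Type) : Type :=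
  | FVar of V
  | FTop
  | FBot
  | FNot of pform V
  | FAnd of pform V & pform V
  | FOr of pform V & pform V
  | FImp of pform V & pform V.

Definition assignment (V : finType) := {ffun V -> bool}.

Fixpoint fsat (V : finType) (w : assignment V) (phi : pform V) : bool :=
  match phi with
  | FVar x => w x
  | FTop => true
  | FBot => false
  | FNot p => ~~ fsat w p
  | FAnd p q => fsat w p && fsat w q
  | FOr p q => fsat w p || fsat w q
  | FImp p q => fsat w p ==> fsat w q
  end.

Section Prob.
Variables (R : realType) (V : finType).

Definition is_distr (P : assignment V -> R) : Prop :=
  (forall v, 0 <= P v) /\ \sum_(v : assignment V) P v = 1.

Definition probf (P : assignment V -> R) (phi : pform V) : R :=
  \sum_(v : assignment V | fsat v phi) P v.

Record pconstr := PConstr { pc0 : R ; pcterms : seq (R * pform V) }.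

Definition sat_constr (P : assignment V -> R) (c : pconstr) : Prop :=
  0 <= pc0 c + \sum_(t <- pcterms c) t.1 * probf P t.2.

Definition is_model_of (Rc : seq pconstr) (P : assignment V -> R) : Prop :=
  is_distr P /\ forall c, List.In c Rc -> sat_constr P c.

(* entropy H(P) = - sum_v P(v) log P(v)  (0 log 0 = 0 since 0 * _ = 0) *)
Definition entropy (P : assignment V -> R) : R :=
  - \sum_(v : assignment V) P v * ln (P v).

Definition is_ME (Rc : seq pconstr) (P : assignment V -> R) : Prop :=
  is_model_of Rc P /\ forall Q, is_model_of Rc Q -> entropy Q <= entropy P.
End Prob.

Arguments PConstr {R V}.

Section ALC.
Variables (NC NR : Type).

Inductive concept : Type :=
  | CAtom of NC
  | CNeg of concept
  | CAnd of concept & concept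
  | CEx of NR & concept.

Record interp := Interp {
  idom : Type ;
  idom_ne : inhabited idom ;
  iconc : NC -> idom -> Prop ;
  irole : NR -> idom -> idom -> Prop }.

Fixpoint csem (I : interp) (C : concept) : idom I -> Prop :=
  match C with
  | CAtom A => @iconc I A
  | CNeg C' => fun x => ~ @csem I C' x
  | CAnd C1 C2 => fun x => @csem I C1 x /\ @csem I C2 x
  | CEx r C' => fun x => exists y, @irole I r x y /\ @csem I C' y
  end.

Definition csub (I : interp) (C D : concept) : Prop :=
  forall x, @csem I C x -> @csem I D x.

Definition entails (Tc : seq (concept * concept)) (C D : concept) : Prop :=
  forall I : interp, (forall g, List.In g Tc -> @csub I g.1 g.2) -> @csub I C D.
End ALC.

Section ALCP.
Variables (R : realType) (V : finType) (NC NR : Type).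

Record gci := GCI { gC : concept NC NR ; gD : concept NC NR ; gk : pform V }.

Definition Tw (Tc : seq gci) (w : assignment V) : seq (concept NC NR * concept NC NR) :=
  [seq (gC g, gD g) | g <- Tc & fsat w (gk g)].

Record pworld := PWorld { pwI : interp NC NR ; pwv : assignment V }.

Definition pw_models (I : pworld) (g : gci) : Prop :=
  ~~ fsat (pwv I) (gk g) \/ csub (pwI I) (gC g) (gD g).

Record alcp_interp := ALCPInterp {
  aidx : finType ;
  aworld : aidx -> pworld ;
  aprob : aidx -> R ;
  aprob_ge0 : forall i, 0 <= aprob i ;
  aprob_sum1 : \sum_(i : aidx) aprob i = 1 }.

Definition marg (P : alcp_interp) (v : assignment V) : R :=
  \sum_(i : aidx P | pwv (aworld i) == v) aprob i.

Definition is_ME_model (Tc : seq gci) (Pme : assignment V -> R)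
    (P : alcp_interp) : Prop :=
  (forall (i : aidx P) g, List.In g Tc -> pw_models (aworld i) g) /\
  (forall v, marg P v = Pme v).

Definition ME_consistent (Tc : seq gci) (Pme : assignment V -> R) : Prop :=
  exists P, is_ME_model Tc Pme P.

Definition cond_pr (P : alcp_interp) (C D : concept NC NR) (k : pform V) : R :=
  (\sum_(i : aidx P | `[< fsat (pwv (aworld i)) k /\ csub (pwI (aworld i)) C D >])
      aprob i) /
  (\sum_(i : aidx P | fsat (pwv (aworld i)) k) aprob i).

Definition sceptical_belief (Tc : seq gci) (Pme : assignment V -> R)
    (C D : concept NC NR) (k : pform V) : R :=
  inf [set x | exists P, is_ME_model Tc Pme P /\ x = cond_pr P C D k].
End ALCP.

From HB Require Import structures.
From mathcomp Require Import all_boot all_order all_algebra.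
From mathcomp Require Import boolp classical_sets reals exp.
From Stdlib Require List.
Import Order.TTheory GRing.Theory Num.Theory.
Local Open Scope ring_scope.
Set Implicit Arguments.

(* Every ME-model has the marginal P^ME on assignments, so the worlds that
   satisfy kappa and whose assignment w makes C ⊑ D entailed by T_w always
   count towards Pr(C ⊑ D | kappa); this gives the lower bound.  Conversely,
   in any ME-model each world whose assignment does not entail C ⊑ D can be
   replaced by a classical counter-model of T_w ⊨ C ⊑ D with the same
   assignment; the resulting ME-model attains the bound, so the infimum is a
   minimum. *)

Lemma inf_attained (R : realType) (E : set R) (x : R) :
  E x -> lbound E x -> inf E = x.
Proof.
move=> Ex lbx; apply/eqP; rewrite eq_le; apply/andP; split.
- by apply: ge_inf => //; exists x.
- by apply: lb_le_inf => //; exists x.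
Qed.

Section TBoxes.
Variables (V : finType) (NC NR : Type).
Implicit Types (Tc : seq (gci V NC NR)) (W : pworld V NC NR).

Definition models_tbox Tc W := forall g, List.In g Tc -> pw_models W g.

Lemma In_Tw Tc w c :
  List.In c (Tw Tc w) <->
  exists2 g, List.In g Tc & fsat w (gk g) /\ c = (gC g, gD g).
Proof.
elim: Tc c => [|h Tc IH] c; first by split=> // [[]].
rewrite /Tw /=; case: ifP => [hw|hNw] /=; split.
- by case=> [<-|/IH [g Tg gc]]; [exists h; [left|] | exists g; [right|]].
- by case=> g [<-|Tg] [gw ->]; [left|right; apply/IH; exists g].
- by move/IH => [g Tg gc]; exists g; [right|].
- case=> g [<-|Tg] [gw ->]; first by rewrite gw in hNw.
  by apply/IH; exists g.
Qed.

Lemma models_tboxE Tc W :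
  models_tbox Tc W <->
  forall c, List.In c (Tw Tc (pwv W)) -> csub (pwI W) c.1 c.2.
Proof.
split=> [WT c /In_Tw [g Tg [gw ->]] | WTw g Tg].
  by case: (WT g Tg) => //; rewrite gw.
rewrite /pw_models; case gw: (fsat _ _); [right | by left].
by apply: (WTw (gC g, gD g)); apply/In_Tw; exists g.
Qed.

Lemma csub_of_entails Tc W C D :
  models_tbox Tc W -> entails (Tw Tc (pwv W)) C D -> csub (pwI W) C D.
Proof. by move=> /models_tboxE WTw; apply. Qed.

Definition tight_world Tc C D W : Prop :=
  csub (pwI W) C D <-> entails (Tw Tc (pwv W)) C D.

Lemma exists_tight_world Tc W C D :
  models_tbox Tc W ->
  exists W', [/\ pwv W' = pwv W, models_tbox Tc W' & tight_world Tc C D W'].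
Proof.
move=> WT; case: (pselect (entails (Tw Tc (pwv W)) C D)) => [CD|].
  by exists W; split=> //; split=> [_ //|]; apply: csub_of_entails.
move=> /existsNP [I /not_implyP [ITw NCD]].
exists (PWorld I (pwv W)); split=> //; first exact/models_tboxE.
by split=> [/NCD []|]; apply.
Qed.
End TBoxes.

Section MEModels.
Variables (R : realType) (V : finType) (NC NR : Type).
Variables (Tc : seq (gci V NC NR)) (Pme : assignment V -> R).
Implicit Types (P : alcp_interp R V NC NR).

Lemma ME_model_tbox P (i : aidx P) :
  is_ME_model Tc Pme P -> models_tbox Tc (aworld i).
Proof. by case=> PT _; apply: PT. Qed.

Lemma sum_aprob_by_assignment P (Q : pred (assignment V)) :
  \sum_(i : aidx P | Q (pwv (aworld i))) aprob i = \sum_(w | Q w) marg P w.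
Proof.
rewrite (partition_big (fun i => pwv (aworld i)) Q) //=.
apply: eq_bigr => w Qw; apply: eq_bigl => i.
by case: eqP => [->|]; rewrite ?Qw ?andbF ?andbT.
Qed.

Lemma ME_model_sum_aprob P (Q : pred (assignment V)) :
  is_ME_model Tc Pme P ->
  \sum_(i : aidx P | Q (pwv (aworld i))) aprob i = \sum_(w | Q w) Pme w.
Proof.
by case=> _ PPme; rewrite sum_aprob_by_assignment; apply: eq_bigr => w _.
Qed.

Variables (C D : concept NC NR) (k : pform V).

Definition entailed_at (w : assignment V) : bool :=
  `[< entails (Tw Tc w) C D >] && fsat w k.

Lemma ME_model_cond_pr_ge P :
  is_ME_model Tc Pme P ->
  (\sum_(w | entailed_at w) Pme w) / probf Pme k <= cond_pr P C D k.
Proof.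
move=> MEP; rewrite /cond_pr.
have den : \sum_(i : aidx P | fsat (pwv (aworld i)) k) aprob i = probf Pme k.
  exact: (ME_model_sum_aprob (fun w => fsat w k) MEP).
have den_ge0 : 0 <= probf Pme k.
  by rewrite -den; apply: sumr_ge0 => i _; apply: aprob_ge0.
rewrite den -(ME_model_sum_aprob entailed_at MEP).
apply: ler_wpM2r; first by rewrite invr_ge0.
rewrite [X in X <= _]big_mkcond [X in _ <= X]big_mkcond /=.
apply: ler_sum => i _.
case: ifP => [/andP [/asboolP CD wk] | _]; last by case: ifP => // _; apply: aprob_ge0.
rewrite ifT //; apply/asboolP; split=> //.
exact: (csub_of_entails (ME_model_tbox i MEP)).
Qed.

Lemma ME_model_cond_pr_tight P :
  is_ME_model Tc Pme P ->
  (forall i : aidx P, tight_world Tc C D (aworld i)) ->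
  cond_pr P C D k = (\sum_(w | entailed_at w) Pme w) / probf Pme k.
Proof.
move=> MEP tightP; rewrite /cond_pr -(ME_model_sum_aprob entailed_at MEP).
rewrite (ME_model_sum_aprob (fun w => fsat w k) MEP); congr (_ / _).
apply: eq_bigl => i; rewrite /entailed_at.
apply/asboolP/andP => [[wk /tightP CD] | [/asboolP/tightP CD wk]] //.
by split=> //; apply/asboolP.
Qed.

Lemma exists_tight_ME_model P :
  is_ME_model Tc Pme P ->
  exists2 P', is_ME_model Tc Pme P' &
    forall i : aidx P', tight_world Tc C D (aworld i).
Proof.
move=> MEP.
have [f tight_f] := choice (fun i => exists_tight_world C D (ME_model_tbox i MEP)).
exists (ALCPInterp f (@aprob_ge0 _ _ _ _ P) (@aprob_sum1 _ _ _ _ P)).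
  split=> [i|v]; first by case: (tight_f i).
  case: MEP => _ <-; apply: eq_bigl => i /=.
  by case: (tight_f i) => ->.
by move=> i; case: (tight_f i).
Qed.
End MEModels.

Theorem theorem3 (R : realType) (V : finType) (NC NR : Type)
  (Rc : seq (pconstr R V)) (Tc : seq (gci V NC NR))
  (Pme : assignment V -> R)
  (HME : is_ME Rc Pme)
  (Hcons : ME_consistent Tc Pme)
  (C D : concept NC NR) (k : pform V)
  (Hk : 0 < probf Pme k) :
  sceptical_belief Tc Pme C D k =
    (\sum_(w : assignment V | `[< entails (Tw Tc w) C D >] && fsat w k) Pme w)
      / probf Pme k.
Proof.
have [P0 MEP0] := Hcons.
have [P MEP tightP] := exists_tight_ME_model C D MEP0.
apply: inf_attained.
  by exists P; split=> //; rewrite (ME_model_cond_pr_tight k MEP tightP).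
by move=> _ [P' [MEP' ->]]; apply: ME_model_cond_pr_ge.
Qed.
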